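(* Assume the policies $\mathcal S$ and $\emptyset$ are unichain in $\mathcal M$ and that $\mathcal M$ is indexable. Then every Whittle index $\lambda_s$ of $\mathcal M$ satisfies $$-\|r^1-r^0\|_\infty-\tfrac12\,\mathrm{sp}(r^1)D(P^1)\|P^1-P^0\|_\infty\ \le\ \lambda_s\ \le\ \|r^1-r^0\|_\infty+\tfrac12\,\mathrm{sp}(r^0)D(P^0)\|P^1-P^0\|_\infty.$$
   Context: Setting. An MDP is $\mathcal M=(\mathcal S,\{0,1\},(P^a)_a,(r^a)_a)$, finite $\mathcal S$, row-stochastic $P^0,P^1$, rewards $r^0,r^1\in\mathbb R^{\mathcal S}$. A policy is a subset $\pi\subseteq\mathcal S$ of states where action 1 is played, inducing $P^\pi$, $r^\pi$; $\mathcal M$ is unichain if every $P^\pi$ has a single recurrent class. For $\lambda\in\mathbb R$, $\mathcal M(\lambda)$ has the same transitions and rewards $r^1-\lambda\mathbf 1$ (action 1), $r^0$ (action 0). For a unichain policy, bias $b^\pi(\lambda)$ solves $g^\pi\mathbf 1+b^\pi=r^\pi+P^\pi b^\pi$; activation advantage $\alpha^\pi_s(\lambda)=r^1_s-\lambda-r^0_s+(P^1_{s,\cdot}-P^0_{s,\cdot})\cdot b^\pi(\lambda)$. A policy is BO (bias optimal) in $\mathcal M(\lambda)$ if gain optimal and bias-maximal among gain-optimal policies; for unichain MDPs $\pi$ is BO iff $\alpha^\pi_s(\lambda)\ge0$ for $s\in\pi$ and $\le0$ for $s\notin\pi$. The optimal activation advantage $\alpha^*_s(\lambda)$ is $\alpha^\pi_s(\lambda)$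 for any BO policy $\pi$ of $\mathcal M(\lambda)$. $\mathcal M$ is indexable if for every $s$ there is $\lambda_s$ (Whittle index) with $\alpha^*_s(\lambda)>0$ for $\lambda<\lambda_s$ and $\alpha^*_s(\lambda)<0$ for $\lambda>\lambda_s$. $\mathrm{sp}(v)=\max v-\min v$; $\|v\|_\infty=\max_s|v_s|$; $\|A\|_\infty=\max_s\sum_{s'}|A_{s,s'}|$. Diameter of a unichain $P$ with recurrent class $\mathcal S_r$: $D(P)=\max_{s\in\mathcal S,s'\in\mathcal S_r}\mathbb E^P[\tau_{s,s'}]$ (expected hitting time). *)

From HB Require Import structures.
From mathcomp Require Import all_boot all_order all_algebra.
From mathcomp Require Import reals topology normedtype sequences.
Set Implicit Arguments. Unset Strict Implicit. Unset Printing Implicit Defensive.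
Import Order.TTheory GRing.Theory Num.Theory numFieldNormedType.Exports.
Local Open Scope ring_scope.

(* State space: 'I_n.+1 (a nonempty finite set). Vectors: 'I_n.+1 -> R.
   Transition matrices: 'M[R]_n.+1.  Policies: finite sets {set 'I_n.+1}
   of states where action 1 is played. *)

Section Defs.
Variables (R : realType) (n : nat).
Notation S := 'I_n.+1.
Notation vec := (S -> R).
Notation mx := 'M[R]_n.+1.

Definition stochastic (P : mx) : Prop :=
  (forall i j, 0 <= P i j) /\ (forall i, \sum_j P i j = 1).

Definition mxv (P : mx) (v : vec) : vec := fun i => \sum_j P i j * v j.

Definition edge (P : mx) : rel S := fun i j => 0 < P i j.
Definition accessible (P : mx) (i j : S) : bool := connect (edge P) i j.
Definition recurrent (P : mx) (i : S) : bool :=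
  [forall j, accessible P i j ==> accessible P j i].
(* exactly one recurrent class: recurrent states exist and all communicate *)
Definition unichain (P : mx) : Prop :=
  (exists i, recurrent P i) /\
  (forall i j, recurrent P i -> recurrent P j -> accessible P i j).

Definition pol_mx (P0 P1 : mx) (pi : {set S}) : mx :=
  \matrix_(i, j) (if i \in pi then P1 i j else P0 i j).
Definition pol_rew (r0 r1 : vec) (lam : R) (pi : {set S}) : vec :=
  fun i => if i \in pi then r1 i - lam else r0 i.

Definition gain (P : mx) (r : vec) : vec := fun i =>
  limn (fun N : nat => N.+1%:R^-1 * \sum_(t < N.+1) mxv (P ^+ t) r i).
(* bias h = C-lim_N sum_{t<N} (P^t - P^* ) r  (Puterman, Sec. 8.2) *)
Definition bias (P : mx) (r : vec) : vec := fun i =>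
  limn (fun N : nat => N.+1%:R^-1 *
    \sum_(m < N.+1) \sum_(t < m.+1) (mxv (P ^+ t) r i - gain P r i)).

Section MDP.
Variables (P0 P1 : mx) (r0 r1 : vec).

Definition pgain (lam : R) (pi : {set S}) : vec :=
  gain (pol_mx P0 P1 pi) (pol_rew r0 r1 lam pi).
Definition pbias (lam : R) (pi : {set S}) : vec :=
  bias (pol_mx P0 P1 pi) (pol_rew r0 r1 lam pi).

Definition gain_optimal (lam : R) (pi : {set S}) : Prop :=
  forall pi' s, pgain lam pi' s <= pgain lam pi s.
Definition bias_optimal (lam : R) (pi : {set S}) : Prop :=
  gain_optimal lam pi /\
  forall pi', gain_optimal lam pi' -> forall s, pbias lam pi' s <= pbias lam pi s.

Definition act_adv (lam : R) (pi : {set S}) (s : S) : R :=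
  r1 s - lam - r0 s + \sum_j (P1 s j - P0 s j) * pbias lam pi j.

(* lam_s is a Whittle index of s: the optimal activation advantage
   alpha^*_s(lam) (= alpha^pi_s(lam) for any BO policy pi of M(lam)) is > 0
   for lam < lam_s and < 0 for lam > lam_s. *)
Definition whittle_index (s : S) (lam_s : R) : Prop :=
  (forall lam, lam < lam_s -> forall pi, bias_optimal lam pi -> 0 < act_adv lam pi s) /\
  (forall lam, lam_s < lam -> forall pi, bias_optimal lam pi -> act_adv lam pi s < 0).

Definition indexable : Prop := forall s, exists lam_s, whittle_index s lam_s.

End MDP.

Definition sp (v : vec) : R :=
  \big[Num.max/v ord0]_s v s - \big[Num.min/v ord0]_s v s.
Definition normv (v : vec) : R := \big[Num.max/0]_s `|v s|.
Definition normm (A : mx) : R := \big[Num.max/0]_i \sum_j `|A i j|.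

(* tau_{s,s'} = min {t >= 0 : X_t = s'} for the chain P started at X_0 = s.
   Taboo matrix: transitions avoiding s'. *)
Definition taboo (P : mx) (s' : S) : mx :=
  \matrix_(i, j) (if j == s' then 0 else P i j).
(* Pr_s(tau_{s,s'} = t) *)
Definition hit_prob (P : mx) (s s' : S) (t : nat) : R :=
  match t with
  | 0 => (s == s')%:R
  | t'.+1 => (s != s')%:R * ((taboo P s' ^+ t') *m P) s s'
  end.
Definition exp_hit (P : mx) (s s' : S) : R :=
  limn (fun N : nat => \sum_(t < N) (t%:R * hit_prob P s s' t)).
Definition diam (P : mx) : R :=
  \big[Num.max/0]_s \big[Num.max/0]_(s' | recurrent P s') exp_hit P s s'.

End Defs.

(* For [lam] below the lower bound, the all-active policy has a strictly
   positive activation advantage at every state.  Indeed the advantage differs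
   from [r1 s - lam - r0 s] by [(P1 - P0)_s . b], which is at most
   [|P1 - P0| sp(b) / 2] because both rows sum to [1]; and [sp(b) <= sp(r1) D(P1)],
   since the bias relative to a recurrent state [x] is the reward (minus the
   gain) collected before hitting [x], whose expected duration is at most
   [D(P1)].  A policy whose advantages have the strict signs prescribed by its
   own action set is bias optimal: any other policy loses [|advantage|] at the
   states where it deviates, which lowers its gain or, at equal gain, its bias.
   So the all-active policy is bias optimal with positive advantage at [s], and
   [lam] cannot exceed the Whittle index.  The upper bound is symmetric, with
   the all-passive policy.  Gain and bias, defined as Cesaro limits, are
   computed by splitting a reward into a [P]-invariant part and a part
   [w - P w]. *)

From HB Require Import structures.
From mathcomp Require Import all_boot all_order all_algebra.
From mathcomp Require Import reals topology normedtype sequences.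
From mathcomp Require Import boolp.
From mathcomp Require Import ring lra.
Import Order.TTheory GRing.Theory Num.Theory numFieldNormedType.Exports.
Local Open Scope ring_scope.
Set Implicit Arguments. Unset Strict Implicit. Unset Printing Implicit Defensive.

Section MatrixAction.
Variables (R : realType) (n : nat).
Notation S := 'I_n.+1.
Notation vec := (S -> R).
Notation mx := 'M[R]_n.+1.
Implicit Types (P A B : mx) (u v w : vec).

Definition nonneg_mx A := forall i j, 0 <= A i j.

Lemma eq_mxv P u v i : (forall j, u j = v j) -> mxv P u i = mxv P v i.
Proof. by move=> uv; apply: eq_bigr => j _; rewrite uv. Qed.

Lemma mxvD P u v i : mxv P (fun j => u j + v j) i = mxv P u i + mxv P v i.
Proof. by rewrite /mxv -big_split; apply: eq_bigr => j _; rewrite mulrDr. Qed.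

Lemma mxvB P u v i : mxv P (fun j => u j - v j) i = mxv P u i - mxv P v i.
Proof. by rewrite /mxv -sumrB; apply: eq_bigr => j _; rewrite mulrBr. Qed.

Lemma mxvZ P c u i : mxv P (fun j => c * u j) i = c * mxv P u i.
Proof. by rewrite /mxv mulr_sumr; apply: eq_bigr => j _; rewrite mulrCA. Qed.

Lemma mxv0 P i : mxv P (fun _ => 0) i = 0.
Proof. by rewrite /mxv big1 // => j _; rewrite mulr0. Qed.

Lemma mxvM A B v i : mxv (A * B) v i = mxv A (mxv B v) i.
Proof.
rewrite /mxv; under eq_bigr do rewrite -mulmxE mxE mulr_suml.
rewrite exchange_big /=; apply: eq_bigr => k _; rewrite mulr_sumr.
by apply: eq_bigr => j _; rewrite mulrA.
Qed.

Lemma mxv1 v i : mxv 1 v i = v i.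
Proof.
rewrite /mxv (bigD1 i) //= big1 ?addr0; first by rewrite mxE eqxx mul1r.
by move=> j /negPf ji; rewrite mxE eq_sym ji mul0r.
Qed.

Lemma mxvXS P t v i : mxv (P ^+ t.+1) v i = mxv P (mxv (P ^+ t) v) i.
Proof. by rewrite exprS mxvM. Qed.

Lemma mxvXSr P t v i : mxv (P ^+ t.+1) v i = mxv (P ^+ t) (mxv P v) i.
Proof. by rewrite exprSr mxvM. Qed.

Lemma ler_mxv A u v i : nonneg_mx A -> (forall j, u j <= v j) ->
  mxv A u i <= mxv A v i.
Proof. by move=> A0 uv; apply: ler_sum => j _; rewrite ler_wpM2l. Qed.

Lemma mxv_ge0 A v i : nonneg_mx A -> (forall j, 0 <= v j) -> 0 <= mxv A v i.
Proof. by move=> A0 v0; apply: sumr_ge0 => j _; apply: mulr_ge0. Qed.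

Lemma nonneg_mxX A t : nonneg_mx A -> nonneg_mx (A ^+ t).
Proof.
move=> A0; elim: t => [|t IH] i j; first by rewrite expr0 mxE ler0n.
by rewrite exprS -mulmxE mxE sumr_ge0 // => l _; rewrite mulr_ge0.
Qed.

Lemma stochastic_nonneg P : stochastic P -> nonneg_mx P.
Proof. by case. Qed.

Lemma stochasticM A B : stochastic A -> stochastic B -> stochastic (A * B).
Proof.
move=> [A0 A1] [B0 B1]; split.
  by move=> i j; rewrite -mulmxE mxE sumr_ge0 // => k _; rewrite mulr_ge0.
move=> i; under eq_bigr do rewrite -mulmxE mxE.
rewrite exchange_big /= -[RHS](A1 i); apply: eq_bigr => k _.
by rewrite -mulr_sumr B1 mulr1.
Qed.

Lemma stochastic1 : stochastic (1 : mx).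
Proof.
split; first by move=> i j; rewrite mxE ler0n.
move=> i; rewrite (bigD1 i) //= big1 ?addr0; first by rewrite mxE eqxx.
by move=> j /negPf ji; rewrite mxE eq_sym ji.
Qed.

Lemma stochasticX P t : stochastic P -> stochastic (P ^+ t).
Proof.
move=> sP; elim: t => [|t IH]; first exact: stochastic1.
by rewrite exprS; apply: stochasticM.
Qed.

Lemma mxv_cst P c i : stochastic P -> mxv P (fun _ => c) i = c.
Proof. by move=> [_ P1]; rewrite /mxv -mulr_suml P1 mul1r. Qed.

Lemma norm_mxv_le P v M i : stochastic P -> (forall j, `|v j| <= M) ->
  `|mxv P v i| <= M.
Proof.
move=> sP vM; have P0 := stochastic_nonneg sP.
rewrite ler_norml; apply/andP; split.
  rewrite -[X in X <= _](mxv_cst (- M) i sP); apply: ler_mxv => // j.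
  by rewrite lerNl; apply: le_trans (vM j); rewrite -normrN ler_norm.
rewrite -[X in _ <= X](mxv_cst M i sP); apply: ler_mxv => // j.
by apply: le_trans (vM j); apply: ler_norm.
Qed.

Lemma norm_le_sum_norm v i : `|v i| <= \sum_j `|v j|.
Proof. by rewrite (bigD1 i) //= lerDl sumr_ge0. Qed.

Lemma norm_subr_mxvX_le P w t i : stochastic P ->
  `|w i - mxv (P ^+ t) w i| <= \sum_j `|w j| + \sum_j `|w j|.
Proof.
move=> sP; apply: le_trans (ler_normB _ _) _.
apply: lerD; first exact: norm_le_sum_norm.
by apply: norm_mxv_le; [exact: stochasticX | exact: norm_le_sum_norm].
Qed.

End MatrixAction.

Section FixedRangeDecomposition.
Variables (R : realType) (n : nat).
Notation S := 'I_n.+1.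
Notation vec := (S -> R).
Notation mx := 'M[R]_n.+1.
Implicit Types (P : mx) (u v w z : vec).

Lemma mxvX_drift P u z t i : stochastic P -> (forall j, mxv P u j = u j) ->
  (forall j, u j = z j - mxv P z j) -> mxv (P ^+ t) z i = z i - t%:R * u i.
Proof.
move=> sP Pu uz; elim: t i => [|t IH] i; first by rewrite expr0 mxv1 mul0r subr0.
by rewrite mxvXS (eq_mxv _ _ IH) mxvB mxvZ Pu uz mulrSr; ring.
Qed.

(* Since [rowv v *m (1 - P)^T = rowv (v - P v)], the fixed vectors of [P] are
   the kernel of [(1 - P)^T] and the vectors [w - P w] its row space. *)
Let rowv v : 'rV[R]_n.+1 := \row_j v j.
Let rowv_of (u : 'rV[R]_n.+1) : rowv (u 0) = u.
Proof. by apply/rowP => j; rewrite mxE. Qed.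
Let Lap P : mx := (1%:M - P)^T.

Let rowv_Lap P v i : (rowv v *m Lap P) 0 i = v i - mxv P v i.
Proof.
rewrite /Lap linearB /= trmx1 mulmxBr mulmx1 !mxE.
by congr (_ - _); apply: eq_bigr => j _; rewrite !mxE mulrC.
Qed.

(* A fixed vector [u = z - P z] makes [P^t z = z - t u] grow linearly,
   which boundedness of the stochastic [P^t] forbids unless [u = 0]. *)
Let fixed_cap_range_eq0 P (u : 'rV[R]_n.+1) : stochastic P ->
  (u <= kermx (Lap P))%MS -> (u <= Lap P)%MS -> u = 0.
Proof.
move=> sP /sub_kermxP uL /submxP [z uz].
have Pu j : mxv P (u 0) j = u 0 j.
  have := rowv_Lap P (u 0) j; rewrite rowv_of uL mxE.
  by move=> /eqP; rewrite eq_sym subr_eq0 => /eqP.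
have uz' j : u 0 j = z 0 j - mxv P (z 0) j by rewrite -rowv_Lap rowv_of -uz.
apply/rowP => i; rewrite mxE; apply/eqP/negPn/negP => ui0.
pose M := \sum_j `|z 0 j|.
have drift_le t : t%:R * `|u 0 i| <= M + M.
  have := mxvX_drift t i sP Pu uz'.
  move=> /(congr1 (fun x => z 0 i - x)); rewrite opprB addrCA subrr addr0.
  by move=> h; rewrite -normr_nat -normrM -h norm_subr_mxvX_le.
have upos : 0 < `|u 0 i| by rewrite normr_gt0.
have := drift_le (Num.bound ((M + M) / `|u 0 i|)).
rewrite -ler_pdivlMr // leNgt => /negP; apply.
by apply: archi_boundP; rewrite divr_ge0 // addr_ge0 // sumr_ge0.
Qed.

Lemma decomp_fixed_range P v : stochastic P -> exists k w,
  (forall i, mxv P k i = k i) /\ (forall i, v i = k i + (w i - mxv P w i)).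
Proof.
move=> sP; set L := Lap P.
have capL : (kermx L :&: L)%MS = 0.
  apply/row_matrixP => i; rewrite row0; apply: (fixed_cap_range_eq0 sP).
    exact: submx_trans (row_sub _ _) (capmxSl _ _).
  exact: submx_trans (row_sub _ _) (capmxSr _ _).
have full : row_full (kermx L + L)%MS.
  rewrite /row_full; apply/eqP.
  have := mxrank_sum_cap (kermx L) L; rewrite capL mxrank0 addn0 mxrank_ker.
  by move=> ->; rewrite subnK // rank_leq_row.
have /sub_addsmxP [[a b] /= vab] := submx_full (rowv v) full.
exists (fun j => (a *m kermx L) 0 j), (fun j => b 0 j); split.
  move=> i; have := rowv_Lap P (fun j => (a *m kermx L) 0 j) i.
  rewrite rowv_of -mulmxA mulmx_ker mulmx0 mxE => /eqP.
  by rewrite eq_sym subr_eq0 => /eqP.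
move=> i; have := congr1 (fun M : 'rV[R]_n.+1 => M 0 i) vab; rewrite /= mxE => ->.
by rewrite mxE -rowv_Lap rowv_of.
Qed.

End FixedRangeDecomposition.

Section CesaroLimits.
Local Open Scope classical_set_scope.
Variables (R : realType) (n : nat).
Notation S := 'I_n.+1.
Notation vec := (S -> R).
Notation mx := 'M[R]_n.+1.
Implicit Types (P : mx) (u v w k : vec).

Lemma cvg_harmonicM (x : nat -> R) C : (forall N, `|x N| <= C) ->
  (fun N => harmonic N * x N) @ \oo --> (0 : R).
Proof.
move=> xC.
apply: (@squeeze_cvgr _ _ _ _ (fun N => - (C * harmonic N)) (fun N => C * harmonic N)).
- near=> N; have hp : 0 <= harmonic N :> R by apply: harmonic_ge0.
  have : `|harmonic N * x N| <= C * harmonic N.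
    by rewrite normrM ger0_norm // mulrC ler_wpM2r.
  by rewrite ler_norml.
- have := cvgN (cvgMl_tmp (a := C) (@cvg_harmonic R)); rewrite mulr0 oppr0; exact.
- have := cvgMl_tmp (a := C) (@cvg_harmonic R); rewrite mulr0; exact.
Unshelve. all: end_near.
Qed.

Lemma mxvX_fixed P k t i : (forall j, mxv P k j = k j) -> mxv (P ^+ t) k i = k i.
Proof.
move=> Pk; elim: t i => [|t IH] i; first by rewrite expr0 mxv1.
by rewrite mxvXS (eq_mxv _ _ IH) Pk.
Qed.

Lemma telescope_mxvX P w N i :
  \sum_(t < N) mxv (P ^+ t) (fun j => w j - mxv P w j) i = w i - mxv (P ^+ N) w i.
Proof.
elim: N => [|N IH]; first by rewrite big_ord0 expr0 mxv1 subrr.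
by rewrite big_ord_recr /= IH mxvB -mxvXSr addrA subrK.
Qed.

Section Decomposed.
Variables (P : mx) (v k w : vec).
Hypotheses (sP : stochastic P) (Pk : forall j, mxv P k j = k j).
Hypothesis vkw : forall j, v j = k j + (w j - mxv P w j).

Lemma cesaro_cvg i :
  (fun N => N.+1%:R^-1 * \sum_(t < N.+1) mxv (P ^+ t) v i) @ \oo --> k i.
Proof.
have E N : N.+1%:R^-1 * \sum_(t < N.+1) mxv (P ^+ t) v i =
    k i + harmonic N * (w i - mxv (P ^+ N.+1) w i).
  rewrite (eq_bigr (fun t : 'I_N.+1 =>
      k i + mxv (P ^+ t) (fun j => w j - mxv P w j) i)); last first.
    by move=> t _; rewrite (eq_mxv _ _ vkw) mxvD mxvX_fixed.
  rewrite big_split /= telescope_mxvX sumr_const card_ord mulrDr /=.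
  by rewrite -[k i *+ _]mulr_natl mulrA mulVf ?mul1r // pnatr_eq0.
under eq_cvg do rewrite E.
have := cvgD (@cvg_cst _ (k i) _ \oo _)
  (@cvg_harmonicM (fun N => w i - mxv (P ^+ N.+1) w i) _ (fun N => norm_subr_mxvX_le w N.+1 i sP)).
by rewrite addr0; apply.
Qed.

Lemma gainE i : gain P v i = k i.
Proof. by apply: cvg_lim => //; apply: cesaro_cvg. Qed.

End Decomposed.

Lemma cesaro_is_cvg P v i : stochastic P ->
  cvgn (fun N => N.+1%:R^-1 * \sum_(t < N.+1) mxv (P ^+ t) v i).
Proof.
move=> sP; have [k [w [Pk vkw]]] := decomp_fixed_range v sP.
by apply/cvg_ex; exists (k i); apply: (cesaro_cvg (i := i) sP Pk vkw).
Qed.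

(* The partial sums of [P^t v - g] telescope to [w - P^(m+1) w]; their Cesaro
   means therefore tend to [w] minus the Cesaro limit of [w]. *)
Lemma biasE P v k w i : stochastic P -> (forall j, mxv P k j = k j) ->
  (forall j, v j = k j + (w j - mxv P w j)) -> bias P v i = w i - gain P w i.
Proof.
move=> sP Pk vkw; have [k' [w' [Pk' wkw]]] := decomp_fixed_range w sP.
rewrite (gainE sP Pk' wkw); apply: cvg_lim => //.
have inner m : \sum_(t < m.+1) (mxv (P ^+ t) v i - gain P v i) =
    w i - mxv (P ^+ m.+1) w i.
  rewrite -telescope_mxvX; apply: eq_bigr => t _.
  by rewrite (eq_mxv _ _ vkw) mxvD mxvX_fixed // (gainE sP Pk vkw) addrC addKr.
have shift N : \sum_(m < N.+1) mxv (P ^+ m.+1) w i =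
    \sum_(m < N.+1) mxv (P ^+ m) w i + (mxv (P ^+ N.+1) w i - w i).
  rewrite big_ord_recr /= [in RHS]big_ord_recl /= expr0 mxv1.
  have -> : \sum_(m < N) mxv (P ^+ bump 0 m) w i =
    \sum_(m < N) mxv (P ^+ m.+1) w i by apply: eq_bigr.
  ring.
have E N : N.+1%:R^-1 *
    \sum_(m < N.+1) \sum_(t < m.+1) (mxv (P ^+ t) v i - gain P v i) =
    w i - N.+1%:R^-1 * \sum_(t < N.+1) mxv (P ^+ t) w i
      - harmonic N * (mxv (P ^+ N.+1) w i - w i).
  rewrite (eq_bigr _ (fun (m : 'I_N.+1) _ => inner m)) sumrB sumr_const card_ord.
  rewrite shift /harmonic /= -[w i *+ _]mulr_natl.
  by field; rewrite addrC natr1 pnatr_eq0.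
under eq_cvg do rewrite E.
have bounded N : `|mxv (P ^+ N.+1) w i - w i| <= \sum_j `|w j| + \sum_j `|w j|.
  by rewrite distrC; apply: norm_subr_mxvX_le.
have := cvgB (cvgB (@cvg_cst _ (w i) _ \oo _) (cesaro_cvg (i := i) sP Pk' wkw))
  (cvg_harmonicM bounded).
by rewrite subr0; apply.
Qed.

End CesaroLimits.

Section GainTheory.
Local Open Scope classical_set_scope.
Variables (R : realType) (n : nat).
Notation S := 'I_n.+1.
Notation vec := (S -> R).
Notation mx := 'M[R]_n.+1.
Implicit Types (P : mx) (u v w k d : vec).

Lemma eq_gain P u v i : (forall j, u j = v j) -> gain P u i = gain P v i.
Proof. by move=> uv; have -> : u = v by apply: funext. Qed.

Lemma gainD P u v i : stochastic P ->
  gain P (fun j => u j + v j) i = gain P u i + gain P v i.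
Proof.
move=> sP; have [k1 [w1 [P1 e1]]] := decomp_fixed_range u sP.
have [k2 [w2 [P2 e2]]] := decomp_fixed_range v sP.
rewrite (gainE sP P1 e1) (gainE sP P2 e2).
apply: (@gainE _ _ _ _ (fun j => k1 j + k2 j) (fun j => w1 j + w2 j)) => //.
  by move=> j; rewrite mxvD P1 P2.
by move=> j; rewrite e1 e2 mxvD; ring.
Qed.

Lemma gainZ P c u i : stochastic P ->
  gain P (fun j => c * u j) i = c * gain P u i.
Proof.
move=> sP; have [k1 [w1 [P1 e1]]] := decomp_fixed_range u sP.
rewrite (gainE sP P1 e1).
apply: (@gainE _ _ _ _ (fun j => c * k1 j) (fun j => c * w1 j)) => //.
  by move=> j; rewrite mxvZ P1.
by move=> j; rewrite e1 mxvZ; ring.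
Qed.

Lemma gainB P u v i : stochastic P ->
  gain P (fun j => u j - v j) i = gain P u i - gain P v i.
Proof.
move=> sP; rewrite (@eq_gain P _ (fun j => u j + (-1) * v j)).
  by rewrite gainD // gainZ // mulN1r.
by move=> j; rewrite mulN1r.
Qed.

Lemma gain_fixed P k i : stochastic P -> (forall j, mxv P k j = k j) ->
  gain P k i = k i.
Proof.
move=> sP Pk; apply: (@gainE _ _ _ _ k (fun _ => 0)) => // j.
by rewrite mxv0 subrr addr0.
Qed.

Lemma gain_cst P c i : stochastic P -> gain P (fun _ => c) i = c.
Proof. by move=> sP; apply: gain_fixed => // j; apply: mxv_cst. Qed.

Lemma gain_subr_mxv P w i : stochastic P ->
  gain P (fun j => w j - mxv P w j) i = 0.
Proof.
move=> sP; apply: (@gainE _ _ _ _ (fun _ => 0) w) => // j; first exact: mxv0.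
by rewrite add0r.
Qed.

Lemma mxv_gain P v i : stochastic P -> mxv P (gain P v) i = gain P v i.
Proof.
move=> sP; have [k1 [w1 [P1 e1]]] := decomp_fixed_range v sP.
by rewrite (eq_mxv _ _ (fun j => gainE sP P1 e1 j)) (gainE sP P1 e1).
Qed.

Lemma ler_gain P u v i : stochastic P -> (forall j, u j <= v j) ->
  gain P u i <= gain P v i.
Proof.
move=> sP uv; apply: ler_lim; try exact: cesaro_is_cvg.
near=> N; apply: ler_wpM2l; first by rewrite invr_ge0 ler0n.
apply: ler_sum => t _; apply: ler_mxv => //.
by apply: stochastic_nonneg; apply: stochasticX.
Unshelve. all: end_near.
Qed.

Lemma gain_le_superharmonic P d i : stochastic P ->
  (forall t, mxv (P ^+ t) d i <= d i) -> gain P d i <= d i.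
Proof.
move=> sP hd; apply: limr_le; first exact: cesaro_is_cvg.
near=> N; rewrite ler_pdivrMl ?ltr0n //.
rewrite (_ : N.+1%:R * d i = \sum_(t < N.+1) d i); last first.
  by rewrite sumr_const card_ord mulr_natl.
by apply: ler_sum => t _; apply: hd.
Unshelve. all: end_near.
Qed.

Lemma bias_equation P v i : stochastic P ->
  gain P v i + bias P v i = v i + mxv P (bias P v) i.
Proof.
move=> sP; have [k1 [w1 [P1 e1]]] := decomp_fixed_range v sP.
have bE j := biasE j sP P1 e1.
rewrite (eq_mxv _ _ bE) mxvB mxv_gain // bE (gainE sP P1 e1) e1.
ring.
Qed.

Lemma gain_bias P v i : stochastic P -> gain P (bias P v) i = 0.
Proof.
move=> sP; have [k1 [w1 [P1 e1]]] := decomp_fixed_range v sP.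
rewrite (eq_gain _ _ (fun j => biasE j sP P1 e1)) gainB //.
rewrite (gain_fixed (k := gain P w1)) ?subrr // => j.
exact: mxv_gain.
Qed.

End GainTheory.

Section Unichain.
Variables (R : realType) (n : nat).
Notation S := 'I_n.+1.
Notation vec := (S -> R).
Notation mx := 'M[R]_n.+1.
Implicit Types (P : mx) (k : vec).

(* A state whose accessible set has minimal size is recurrent. *)
Lemma exists_recurrent_accessible P i : exists x, accessible P i x && recurrent P x.
Proof.
pose c j := #|[set l | accessible P j l]|.
case: (@arg_minnP _ i (accessible P i) c (connect0 _ _)) => j ij jmin.
exists j; rewrite ij /=; apply/forallP => l; apply/implyP => jl.
have sub : [set m | accessible P l m] \subset [set m | accessible P j m].
  by apply/subsetP => m; rewrite !inE => lm; apply: connect_trans jl lm.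
have : [set m | accessible P l m] = [set m | accessible P j m].
  by apply/eqP; rewrite eqEcard sub /=; apply: jmin; apply: connect_trans ij jl.
by move/setP => /(_ j); rewrite !inE => ->; exact: connect0.
Qed.

Lemma fixed_max_step P k i j : stochastic P -> (forall l, mxv P k l = k l) ->
  (forall l, k l <= k i) -> 0 < P i j -> k j = k i.
Proof.
move=> [P0 P1] Pk kmax Pij.
have H : \sum_l P i l * (k i - k l) = 0.
  under eq_bigr do rewrite mulrBr.
  by rewrite sumrB -mulr_suml P1 mul1r -/(mxv P k i) Pk subrr.
have ge0 l : xpredT l -> 0 <= P i l * (k i - k l).
  by move=> _; rewrite mulr_ge0 // subr_ge0.
move: (psumr_eq0P ge0 H (i := j) isT) => /eqP.
by rewrite mulf_eq0 (gt_eqF Pij) subr_eq0 => /eqP.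
Qed.

Lemma fixed_max_accessible P k i j : stochastic P -> (forall l, mxv P k l = k l) ->
  (forall l, k l <= k i) -> accessible P i j -> k j = k i.
Proof.
move=> sP Pk kmax /connectP [p pth ->] {j}.
elim: p i kmax pth => [|y p IH] i kmax //= /andP [iy pth].
have kyi : k y = k i by apply: fixed_max_step sP Pk kmax iy.
by rewrite (IH y) // => l; rewrite kyi.
Qed.

(* The maximum and the minimum of [k] both propagate to the recurrent class. *)
Lemma unichain_fixed_const P k i j : stochastic P -> unichain P ->
  (forall l, mxv P k l = k l) -> k i = k j.
Proof.
move=> sP [_ uni] Pk.
have [imax _ kmax] := @arg_maxP _ _ S ord0 xpredT k isT.
have [imin _ kmin] := @arg_maxP _ _ S ord0 xpredT (fun l => - k l) isT.
have [x /andP [ax rx]] := exists_recurrent_accessible P imax.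
have [y /andP [ay ry]] := exists_recurrent_accessible P imin.
have kx : k x = k imax by apply: fixed_max_accessible sP Pk _ ax => l; apply: kmax.
have Pk' l : mxv P (fun l => - k l) l = - k l.
  by rewrite -(eq_mxv _ _ (fun j => mulN1r (k j))) mxvZ mulN1r Pk.
have /oppr_inj ky : - k y = - k imin.
  by apply: fixed_max_accessible sP Pk' _ ay => l; apply: kmin.
have kxy : k y = k x.
  by apply: fixed_max_accessible sP Pk _ (uni _ _ rx ry) => l; rewrite kx; apply: kmax.
have kmin' l : k imin <= k l by rewrite -lerN2; apply: kmin.
have kmax' l : k l <= k imax by apply: kmax.
have e : k imax = k imin by rewrite -kx -kxy ky.
by apply/eqP; rewrite eq_le; apply/andP; split; apply: le_trans (kmax' _) _;
  rewrite e kmin'.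
Qed.

Lemma unichain_gain_const P v i j : stochastic P -> unichain P ->
  gain P v i = gain P v j.
Proof.
move=> sP uni; apply: (unichain_fixed_const _ _ sP uni) => l.
exact: mxv_gain.
Qed.

End Unichain.

Section BiasOptimality.
Variables (R : realType) (n : nat).
Notation S := 'I_n.+1.
Notation vec := (S -> R).
Notation mx := 'M[R]_n.+1.

Lemma mxv_pol (P0 P1 : mx) (pi : {set S}) v i :
  mxv (pol_mx P0 P1 pi) v i = if i \in pi then mxv P1 v i else mxv P0 v i.
Proof. by rewrite /mxv; case: ifP => h; apply: eq_bigr => j _; rewrite mxE h. Qed.

Lemma stochastic_pol (P0 P1 : mx) (pi : {set S}) :
  stochastic P0 -> stochastic P1 -> stochastic (pol_mx P0 P1 pi).
Proof.
move=> [A0 A1] [B0 B1]; split; first by move=> i j; rewrite mxE; case: ifP.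
move=> i; under eq_bigr do rewrite mxE.
by case: (i \in pi).
Qed.

Variables (P0 P1 : mx) (r0 r1 : vec) (lam : R) (pi0 : {set S}).
Hypotheses (sP0 : stochastic P0) (sP1 : stochastic P1).
Hypothesis uni : unichain (pol_mx P0 P1 pi0).
Let P := pol_mx P0 P1 pi0.
Let g := pgain P0 P1 r0 r1 lam pi0.
Let b := pbias P0 P1 r0 r1 lam pi0.
Let al := act_adv P0 P1 r0 r1 lam pi0.
Hypothesis al_sign : forall s, if s \in pi0 then 0 < al s else al s < 0.

Let sP : stochastic P. Proof. exact: stochastic_pol. Qed.

Section Deviation.
Variable pi : {set S}.
Let P' := pol_mx P0 P1 pi.
Let r' := pol_rew r0 r1 lam pi.
Let sP' : stochastic P'. Proof. exact: stochastic_pol. Qed.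

(* One-step change of the bias equation of [pi0] when following [pi]. *)
Let delta i := r' i + mxv P' b i - b i - g i.

Let deltaE i : delta i =
  if (i \in pi) == (i \in pi0) then 0 else if i \in pi then al i else - al i.
Proof.
have : g i + b i = pol_rew r0 r1 lam pi0 i + mxv P b i.
  exact: bias_equation.
rewrite /delta /al /act_adv -/b /r' /pol_rew /P' /P !mxv_pol.
have -> : \sum_j (P1 i j - P0 i j) * b j = mxv P1 b i - mxv P0 b i.
  by rewrite /mxv -sumrB; apply: eq_bigr => j _; rewrite mulrBl.
by case: (i \in pi); case: (i \in pi0) => /= h; lra.
Qed.

Let delta_le0 i : delta i <= 0.
Proof.
rewrite deltaE; have := al_sign i.
by case: (i \in pi); case: (i \in pi0) => //= h; [| rewrite oppr_le0]; apply: ltW.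
Qed.

Let delta_lt0 i : (i \in pi) != (i \in pi0) -> delta i < 0.
Proof.
rewrite deltaE; have := al_sign i.
by case: (i \in pi); case: (i \in pi0) => //= h _; rewrite ?oppr_lt0.
Qed.

Let pgain_deviation s : pgain P0 P1 r0 r1 lam pi s = g s + gain P' delta s.
Proof.
rewrite /pgain -/P' -/r' (@eq_gain _ _ P' r' (fun i => (g i + (b i - mxv P' b i)) + delta i) s).
  rewrite gainD // gainD // gain_subr_mxv // addr0; congr (_ + _).
  rewrite (eq_gain _ _ (fun i => unichain_gain_const _ i s sP uni)) gain_cst //.
by move=> i; rewrite /delta; ring.
Qed.

Let gain_delta_le0 s : gain P' delta s <= 0.
Proof. by rewrite -(gain_cst 0 s sP'); apply: ler_gain. Qed.

Lemma pgain_le_of_act_adv s : pgain P0 P1 r0 r1 lam pi s <= g s.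
Proof. by rewrite pgain_deviation gerDl. Qed.

Hypothesis gopt : gain_optimal P0 P1 r0 r1 lam pi.

Let gain_delta s : gain P' delta s = 0.
Proof.
apply/eqP; rewrite eq_le gain_delta_le0 /=.
by have := gopt pi0 s; rewrite -/g pgain_deviation lerDl.
Qed.

(* [b] differs from [w - P' w] by a vector supported where [delta < 0], and
   such a vector is dominated by a multiple of [- delta]. *)
Let gain_dev_bias s : gain P' b s = 0.
Proof.
have [k [w [Pk bkw]]] := decomp_fixed_range b sP.
have k0 j : k j = 0 by rewrite -(gainE sP Pk bkw) gain_bias.
pose x i := mxv P' w i - mxv P w i.
have x0 i : (i \in pi) == (i \in pi0) -> x i = 0.
  by rewrite /x /P' /P !mxv_pol; case: (i \in pi); case: (i \in pi0) => // _;
    rewrite subrr.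
pose K := \sum_i `|x i| / (- delta i).
have K0 : 0 <= K by rewrite sumr_ge0 // => j _; rewrite divr_ge0 // oppr_ge0.
have xK i : `|x i| <= K * (- delta i).
  have [e|ne] := boolP ((i \in pi) == (i \in pi0)).
    by rewrite x0 // normr0 mulr_ge0 // oppr_ge0.
  have dp : 0 < - delta i by rewrite oppr_gt0 delta_lt0.
  rewrite -ler_pdivrMr // /K (bigD1 i) //= lerDl sumr_ge0 // => j _.
  by rewrite divr_ge0 // oppr_ge0.
have gK : gain P' (fun i => K * - delta i) s = 0.
  by rewrite gainZ // (eq_gain _ _ (fun i => esym (mulN1r (delta i)))) gainZ //
    gain_delta !mulr0.
have gx : gain P' x s = 0.
  apply/eqP; rewrite eq_le; apply/andP; split.
    rewrite -gK; apply: ler_gain => // i.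
    by apply: le_trans (xK i); apply: ler_norm.
  rewrite -oppr0 -gK -mulN1r -gainZ //; apply: ler_gain => // i.
  by rewrite mulN1r lerNl; apply: le_trans (xK i); rewrite -normrN ler_norm.
rewrite (@eq_gain _ _ P' b (fun i => (w i - mxv P' w i) + x i) s).
  by rewrite gainD // gain_subr_mxv // gx addr0.
by move=> i; rewrite bkw k0 /x; ring.
Qed.

(* [b - h] is superharmonic for [P'], so it dominates its own gain, which is [0]. *)
Lemma pbias_le_of_act_adv s : pbias P0 P1 r0 r1 lam pi s <= b s.
Proof.
set h := pbias P0 P1 r0 r1 lam pi.
have geq i : pgain P0 P1 r0 r1 lam pi i = g i by rewrite pgain_deviation gain_delta addr0.
have beq' i : g i + h i = r' i + mxv P' h i by rewrite -geq; apply: bias_equation.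
pose d i := b i - h i.
have dPd i : mxv P' d i = d i + delta i.
  by rewrite /d mxvB; have := beq' i; rewrite /delta; lra.
have d_super t i : mxv (P' ^+ t) d i <= d i.
  elim: t i => [|t IH] i; first by rewrite expr0 mxv1.
  rewrite mxvXSr; apply: le_trans (IH i); apply: ler_mxv.
    by apply: stochastic_nonneg; apply: stochasticX.
  by move=> j; rewrite dPd gerDl.
have := gain_le_superharmonic sP' (d_super^~ s).
by rewrite /d gainB // gain_dev_bias /h /pbias gain_bias // subrr subr_ge0.
Qed.

End Deviation.

Lemma bias_optimal_of_act_adv : bias_optimal P0 P1 r0 r1 lam pi0.
Proof.
split; first by move=> pi s; apply: pgain_le_of_act_adv.
by move=> pi gopt s; apply: pbias_le_of_act_adv.
Qed.

End BiasOptimality.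

Section Survival.
Variables (R : realType) (n : nat).
Notation S := 'I_n.+1.
Notation mx := 'M[R]_n.+1.
Variables (P : mx) (x : S).
Hypothesis sP : stochastic P.
Let T := taboo P x.

Lemma nonneg_taboo : nonneg_mx T.
Proof. by move=> i j; rewrite mxE; case: ifP => // _; case: sP. Qed.

Lemma mxv_taboo1 l : mxv T (fun _ => 1) l = 1 - P l x.
Proof.
rewrite /mxv (bigD1 x) //= mxE eqxx mul0r add0r.
case: sP => _ /(_ l); rewrite (bigD1 x) //= => h.
rewrite -[X in _ = X - _]h [in RHS]addrAC subrr add0r; apply: eq_bigr => j /negPf jx.
by rewrite mxE jx mulr1.
Qed.

(* [survival t i] is the probability that the chain started at [i] has not
   visited [x] at times [1, ..., t]. *)
Definition survival t i := mxv (T ^+ t) (fun _ => 1) i.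

Lemma survival0 i : survival 0 i = 1.
Proof. by rewrite /survival expr0 mxv1. Qed.

Lemma survival_ge0 t i : 0 <= survival t i.
Proof. by apply: mxv_ge0 => //; apply: nonneg_mxX; apply: nonneg_taboo. Qed.

Lemma survivalS t i : survival t.+1 i = mxv T (survival t) i.
Proof. by rewrite /survival mxvXS. Qed.

Lemma survivalD t m i : survival (t + m) i = mxv (T ^+ t) (survival m) i.
Proof. by rewrite /survival exprD mxvM. Qed.

Lemma survival_le1 t i : survival t i <= 1.
Proof.
elim: t i => [|t IH] i; first by rewrite survival0.
rewrite survivalS; apply: le_trans (ler_mxv _ nonneg_taboo IH) _.
by rewrite mxv_taboo1 gerBl; case: sP.
Qed.

Lemma survival_leS t i : survival t.+1 i <= survival t i.
Proof.
rewrite /survival mxvXSr; apply: ler_mxv; first exact/nonneg_mxX/nonneg_taboo.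
by move=> j; rewrite mxv_taboo1 gerBl; case: sP.
Qed.

Lemma survival_le t m i : (t <= m)%N -> survival m i <= survival t i.
Proof.
move=> /subnK <-; elim: (m - t)%N => [|q IH]; first by rewrite add0n.
by rewrite addSn; apply: le_trans (survival_leS _ _) IH.
Qed.

Lemma hit_probS i t : i != x -> hit_prob P i x t.+1 = survival t i - survival t.+1 i.
Proof.
move=> ix; rewrite /hit_prob ix mul1r mxE -/T /survival mxvXSr -mxvB.
by apply: eq_bigr => l _; rewrite mxv_taboo1; congr (_ * _); ring.
Qed.

Lemma hit_prob_ge0 i t : 0 <= hit_prob P i x t.
Proof.
case: t => [|t] /=; first by rewrite ler0n.
have [->|ix] := eqVneq i x; first by rewrite mul0r.
have := hit_probS t ix; rewrite /hit_prob ix => ->.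
by rewrite subr_ge0 survival_leS.
Qed.

Lemma sum_hit_prob i N : i != x ->
  \sum_(t < N.+1) t%:R * hit_prob P i x t =
  \sum_(u < N) survival u i - N%:R * survival N i.
Proof.
move=> ix; elim: N => [|N IH]; first by rewrite big_ord1 big_ord0 !mul0r subr0.
rewrite big_ord_recr IH (hit_probS N ix) big_ord_recr /= -[N.+1]addn1 natrD.
ring.
Qed.

End Survival.

Section SurvivalUnichain.
Variables (R : realType) (n : nat).
Notation S := 'I_n.+1.
Notation mx := 'M[R]_n.+1.
Variables (P : mx) (x : S).
Hypothesis sP : stochastic P.
Notation survival := (survival P x).

Lemma survival_lt1_step j l k : 0 < P j l -> (l = x \/ survival k l < 1) ->
  survival k.+1 j < 1.
Proof.
have T0 := nonneg_taboo x sP.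
move=> Pjl h; have [lx|lx] := eqVneq l x.
  rewrite survivalS; apply: le_lt_trans (ler_mxv j T0 (fun m => survival_le1 x sP k m)) _.
  by rewrite mxv_taboo1 // ltrBlDr ltrDl -lx.
case: h => [/eqP|h]; first by rewrite (negPf lx).
have Tj_le1 : \sum_m taboo P x j m <= 1.
  have := mxv_taboo1 x sP j; rewrite /mxv; under eq_bigr do rewrite mulr1.
  by move=> ->; rewrite gerBl; case: sP.
have H : \sum_m taboo P x j m * (survival k m - 1) < 0.
  rewrite (bigD1 l) //= -[X in _ < X](addr0 0); apply: ltr_leD.
    by rewrite mxE (negPf lx) pmulr_rlt0 // subr_lt0.
  rewrite sumr_le0 // => m _; rewrite mulr_ge0_le0 //.
  by rewrite subr_le0 survival_le1.
rewrite survivalS /mxv; apply: lt_le_trans Tj_le1.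
by move: H; under eq_bigr do rewrite mulrBr mulr1; rewrite sumrB subr_lt0.
Qed.

Lemma survival_lt1_accessible j : accessible P j x -> j != x ->
  exists k, survival k j < 1.
Proof.
move=> /connectP [p pth lst]; elim: p j pth lst => [|y p IH] j /= pth lst jx.
  by rewrite lst eqxx in jx.
move: pth => /andP [jy pth]; have [yx|yx] := eqVneq y x.
  by exists 1%N; apply: (survival_lt1_step jy); left.
have [k hk] := IH y pth lst yx.
by exists k.+1; apply: (survival_lt1_step jy); right.
Qed.

Hypotheses (uni : unichain P) (rx : recurrent P x).

Lemma exists_survival_lt1 j : exists k, survival k j < 1.
Proof.
have acc l : accessible P l x.
  have [y /andP [ly ry]] := exists_recurrent_accessible P l.
  by apply: connect_trans ly _; case: uni => _; apply.
have [l Pl] : exists l, 0 < P j l.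
  case: (boolP [exists l, 0 < P j l]) => [/existsP //|/existsPn h].
  case: sP => P0 /(_ j); rewrite big1 => [/eqP|m _]; first by rewrite eq_sym oner_eq0.
  by apply/eqP; rewrite eq_le P0 andbT leNgt h.
have [lx|lx] := eqVneq l x.
  by exists 1%N; apply: (survival_lt1_step Pl); left.
have [k hk] := survival_lt1_accessible (acc l) lx.
by exists k.+1; apply: (survival_lt1_step Pl); right.
Qed.

(* After [K] steps every state has survived with probability at most
   [rho < 1], so the survival probabilities decay geometrically. *)
Let K := (\sum_j xchoose (exists_survival_lt1 j))%N.
Let rho := \big[Num.max/0]_j survival K j.

Let survivalK_lt1 j : survival K j < 1.
Proof.
apply: le_lt_trans (xchooseP (exists_survival_lt1 j)).
by apply: survival_le => //; rewrite /K (bigD1 j) //= leq_addr.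
Qed.

Let K_gt0 : (0 < K)%N.
Proof. by have := survivalK_lt1 x; case: K => //; rewrite survival0 ltxx. Qed.

Let rho_ge0 : 0 <= rho.
Proof. by rewrite /rho bigmax_idl le_max lexx. Qed.

Let rho_lt1 : rho < 1.
Proof. by apply/bigmax_ltP; split => // j _; apply: survivalK_lt1. Qed.

Let sum_survival_le_card N i : \sum_(u < N) survival u i <= N%:R.
Proof.
rewrite -[X in X%:R]card_ord -sumr_const.
by apply: ler_sum => u _; apply: survival_le1.
Qed.

Lemma sum_survival_bounded : exists B, forall N i, \sum_(u < N) survival u i <= B.
Proof.
pose B := K%:R / (1 - rho).
have K_le_B : K%:R <= B.
  by rewrite ler_pdivlMr ?subr_gt0 // ler_piMr // gerBl.
have survivalK_le j : survival K j <= rho by apply: le_bigmax.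
exists B; elim/ltn_ind => N IH i.
have [NK|KN] := leqP N K.
  by apply: le_trans K_le_B; apply: le_trans (sum_survival_le_card N i) _; rewrite ler_nat.
have -> : N = (K + (N - K))%N by rewrite subnKC // ltnW.
rewrite big_split_ord /=.
have tail : \sum_(u < N - K) survival (K + u) i <= rho * B.
  apply: le_trans (_ : \sum_(u < N - K) rho * survival u i <= _).
    apply: ler_sum => u _; rewrite addnC survivalD.
    apply: le_trans (ler_mxv i (nonneg_mxX u (nonneg_taboo x sP)) survivalK_le) _.
    by rewrite -(eq_mxv _ _ (fun j => mulr1 rho)) mxvZ.
  rewrite -mulr_sumr ler_wpM2l //; apply: IH.
  by rewrite ltn_subrL K_gt0 (leq_trans K_gt0) // ltnW.
suff <- : K%:R + rho * B = B by apply: lerD (sum_survival_le_card K i) tail.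
by rewrite /B; field; rewrite subr_eq0 eq_sym (lt_eqF rho_lt1).
Qed.

End SurvivalUnichain.

Section ExpectedHittingTime.
Local Open Scope classical_set_scope.
Variables (R : realType) (n : nat).
Notation S := 'I_n.+1.
Notation mx := 'M[R]_n.+1.
Variables (P : mx) (x : S).
Hypotheses (sP : stochastic P) (uni : unichain P) (rx : recurrent P x).
Notation survival := (survival P x).

Lemma survival_cvg0 i : (fun N => survival N.+1 i) @ \oo --> (0 : R).
Proof.
have [B sumB] := sum_survival_bounded sP uni rx.
apply: (@squeeze_cvgr _ _ _ _ (fun _ => 0) (fun N => B * harmonic N)).
- near=> N; rewrite survival_ge0 //=.
  rewrite /harmonic /= ler_pdivlMr ?ltr0n // mulrC; apply: le_trans (sumB N.+1 i).
  rewrite -[X in X%:R * _]card_ord -sumr_const mulr_suml.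
  by apply: ler_sum => u _; rewrite mul1r survival_le // ltnW.
- exact: cvg_cst.
- by have := cvgMl_tmp (a := B) (@cvg_harmonic R); rewrite mulr0; apply.
Unshelve. all: end_near.
Qed.

Variable i : S.
Hypothesis ix : i != x.
Let partial_exp N := \sum_(t < N) t%:R * hit_prob P i x t.

Let partial_exp_nd : nondecreasing_seq partial_exp.
Proof.
apply/nondecreasing_seqP => N; rewrite /partial_exp big_ord_recr /= lerDl.
by rewrite mulr_ge0 // hit_prob_ge0.
Qed.

Let partial_exp_cvg : cvgn partial_exp.
Proof.
have [B sumB] := sum_survival_bounded sP uni rx.
apply: nondecreasing_is_cvgn; first exact: partial_exp_nd.
have B0 : 0 <= B by have := sumB 0%N i; rewrite big_ord0.
exists B => _ [[|N] _ <-]; first by rewrite /partial_exp big_ord0.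
rewrite /partial_exp sum_hit_prob //; apply: le_trans (sumB N i).
by rewrite gerBl mulr_ge0 ?survival_ge0.
Qed.

Let partial_exp_le N : partial_exp N <= exp_hit P i x.
Proof.
apply: limr_ge; first exact: partial_exp_cvg.
by near=> m; apply: partial_exp_nd; near: m; exact: nbhs_infty_ge.
Unshelve. all: end_near.
Qed.

(* [E tau = sum_u Pr(tau > u)]; only the lower bound on [E tau] is needed. *)
Lemma sum_survival_le_exp_hit M : \sum_(u < M) survival u i <= exp_hit P i x.
Proof.
have H : (fun N => \sum_(u < M) survival u i - M%:R * survival N.+1 i) @ \oo -->
    (\sum_(u < M) survival u i - M%:R * 0).
  by apply: cvgB; [exact: cvg_cst | apply: cvgMl_tmp; apply: survival_cvg0].
rewrite -[X in X <= _]subr0 -[X in _ - X](mulr0 M%:R).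
apply: (cvgr_to_le H); near=> N; apply: le_trans (partial_exp_le N.+2).
have MN : (M <= N.+1)%N by apply: leqW; near: N; exact: nbhs_infty_ge.
have sum_gap k : \sum_(u < k) survival u i - k%:R * survival N.+1 i =
    \sum_(u < k) (survival u i - survival N.+1 i).
  by rewrite sumrB sumr_const card_ord mulr_natl.
rewrite /partial_exp sum_hit_prob // !sum_gap.
rewrite -!(big_mkord xpredT (fun u => survival u i - survival N.+1 i)).
rewrite (big_cat_nat (leq0n M) MN) /= lerDl big_nat_cond sumr_ge0 //.
by move=> u /andP [/andP [_ uN] _]; rewrite subr_ge0 survival_le // ltnW.
Unshelve. all: end_near.
Qed.

End ExpectedHittingTime.

Lemma exp_hit_le_diam (R : realType) n (P : 'M[R]_n.+1) i y :
  recurrent P y -> exp_hit P i y <= diam P.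
Proof. by move=> ry; apply: le_trans (le_bigmax _ _ i); exact: le_bigmax_cond. Qed.

Lemma diam_ge0 (R : realType) n (P : 'M[R]_n.+1) : 0 <= diam P.
Proof. by rewrite /diam bigmax_idl le_max lexx. Qed.

Section BiasOscillation.
Local Open Scope classical_set_scope.
Variables (R : realType) (n : nat).
Notation S := 'I_n.+1.
Notation vec := (S -> R).
Notation mx := 'M[R]_n.+1.
Variables (P : mx) (r : vec) (lo hi : R).
Hypotheses (sP : stochastic P) (uni : unichain P).
Hypotheses (lo_le_r : forall i, lo <= r i) (r_le_hi : forall i, r i <= hi).

Let g := gain P r.
Let b := bias P r.

Section RelativeBias.
Variable x : S.
Hypothesis rx : recurrent P x.
Let T := taboo P x.
Let ga := g x.
Let gE i : g i = ga. Proof. exact: unichain_gain_const. Qed.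
Let lo_le_ga : lo <= ga.
Proof. by rewrite /ga -(gain_cst lo x sP); apply: ler_gain. Qed.
Let ga_le_hi : ga <= hi.
Proof. by rewrite /ga -(gain_cst hi x sP); apply: ler_gain. Qed.

(* Bias relative to [x]: it vanishes at [x], so it solves the bias equation
   with the taboo matrix, and unrolling gives a sum of rewards until [x] is hit. *)
Let c i := b i - b x.

Let c_taboo i : c i = (r i - g i) + mxv T c i.
Proof.
have -> : mxv T c i = mxv P c i.
  apply: eq_bigr => j _; rewrite mxE; case: eqP => [->|//].
  by rewrite /c subrr !mulr0.
rewrite /c mxvB mxv_cst //; have := bias_equation r i sP; rewrite -/g -/b.
lra.
Qed.

Let c_unroll N i : c i =
  \sum_(t < N) mxv (T ^+ t) (fun j => r j - g j) i + mxv (T ^+ N) c i.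
Proof.
elim: N i => [|N IH] i; first by rewrite big_ord0 expr0 mxv1 add0r.
rewrite IH big_ord_recr /= -addrA; congr (_ + _).
by rewrite (eq_mxv _ _ c_taboo) mxvD mxvXSr.
Qed.

Let nonneg_T t : nonneg_mx (T ^+ t).
Proof. exact/nonneg_mxX/nonneg_taboo. Qed.

Let mxvT_cst t c0 i : mxv (T ^+ t) (fun _ => c0) i = c0 * survival P x t i.
Proof. by rewrite -(eq_mxv _ _ (fun j => mulr1 c0)) mxvZ. Qed.

Let C := \sum_j `|c j|.

Let norm_rem_le N i : `|mxv (T ^+ N) c i| <= C * survival P x N i.
Proof.
rewrite ler_norml -mulNr -!mxvT_cst; apply/andP; split;
  apply: ler_mxv => // j; last by apply: le_trans (ler_norm _) (norm_le_sum_norm c j).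
by rewrite lerNl; apply: le_trans (ler_norm _) _; rewrite normrN norm_le_sum_norm.
Qed.

Let rem_cvg0 i : (fun N => C * survival P x N.+1 i) @ \oo --> (0 : R).
Proof. by rewrite -(mulr0 C); apply: cvgMl_tmp; apply: survival_cvg0. Qed.

Let c_le i : c i <= (hi - ga) * diam P.
Proof.
have [->|ix] := eqVneq i x; first by rewrite /c subrr mulr_ge0 ?diam_ge0 ?subr_ge0.
apply: le_trans (_ : (hi - ga) * exp_hit P i x <= _); last first.
  by rewrite ler_wpM2l ?subr_ge0 // exp_hit_le_diam.
have H : (fun N => (hi - ga) * exp_hit P i x + C * survival P x N.+1 i) @ \oo -->
    (hi - ga) * exp_hit P i x.
  by rewrite -[X in _ --> X]addr0; apply: cvgD; [exact: cvg_cst | exact: rem_cvg0].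
apply: (cvgr_to_ge H); near=> N => /=.
rewrite (c_unroll N.+1 i); apply: lerD; last by apply: le_trans (ler_norm _) (norm_rem_le _ _).
apply: le_trans (_ : \sum_(t < N.+1) (hi - ga) * survival P x t i <= _).
  by apply: ler_sum => t _; rewrite -mxvT_cst; apply: ler_mxv => // j; rewrite gE lerB.
rewrite -mulr_sumr ler_wpM2l ?subr_ge0 //; exact: sum_survival_le_exp_hit.
Unshelve. all: end_near.
Qed.

Let c_ge i : (lo - ga) * diam P <= c i.
Proof.
have [->|ix] := eqVneq i x; first by rewrite /c subrr mulr_le0_ge0 ?diam_ge0 ?subr_le0.
apply: le_trans (_ : (lo - ga) * exp_hit P i x <= _).
  by rewrite ler_wnM2l ?subr_le0 // exp_hit_le_diam.
have H : (fun N => (lo - ga) * exp_hit P i x - C * survival P x N.+1 i) @ \oo -->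
    (lo - ga) * exp_hit P i x.
  by rewrite -[X in _ --> X]subr0; apply: cvgB; [exact: cvg_cst | exact: rem_cvg0].
apply: (cvgr_to_le H); near=> N => /=.
rewrite (c_unroll N.+1 i); apply: lerD.
  apply: le_trans (_ : \sum_(t < N.+1) (lo - ga) * survival P x t i <= _); last first.
    by apply: ler_sum => t _; rewrite -mxvT_cst; apply: ler_mxv => // j; rewrite gE lerB.
  rewrite -mulr_sumr ler_wnM2l ?subr_le0 //; exact: sum_survival_le_exp_hit.
by rewrite lerNl; apply: le_trans (ler_norm _) _; rewrite normrN norm_rem_le.
Unshelve. all: end_near.
Qed.

Lemma bias_sub_le_recurrent i j : b i - b j <= (hi - lo) * diam P.
Proof. by have := c_le i; have := c_ge j; rewrite /c; lra. Qed.

End RelativeBias.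

Lemma bias_sub_le i j : b i - b j <= (hi - lo) * diam P.
Proof. by case: uni => [[x rx] _]; apply: (bias_sub_le_recurrent rx). Qed.

End BiasOscillation.

Section SpanAndNorms.
Variables (R : realType) (n : nat).
Notation S := 'I_n.+1.
Notation vec := (S -> R).
Notation mx := 'M[R]_n.+1.
Implicit Types (v : vec) (A P : mx).

Lemma sp_ge0 v : 0 <= sp v.
Proof. by rewrite /sp subr_ge0; apply: (@le_trans _ _ (v ord0)); [exact: bigmin_le | exact: le_bigmax]. Qed.

Lemma sub_le_sp v i j : v i - v j <= sp v.
Proof. by apply: lerB; [exact: le_bigmax | exact: bigmin_le]. Qed.

Lemma sp_le v K : (forall i j, v i - v j <= K) -> sp v <= K.
Proof.
move=> vK; set m := \big[Num.min/v ord0]_j v j.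
have le_m i : v i <= K + m.
  by rewrite -lerBlDl; apply/bigmin_geP; split => [|j _]; [have := vK i ord0 | have := vK i j]; lra.
by rewrite /sp -/m lerBlDr; apply/bigmax_leP; split => [|i _]; apply: le_m.
Qed.

Lemma normv_ge v i : `|v i| <= normv v.
Proof. exact: le_bigmax. Qed.

Lemma normm_ge0 A : 0 <= normm A.
Proof. by rewrite /normm bigmax_idl le_max lexx. Qed.

(* Since both rows sum to [1], [v] may be centred at the midpoint of its range. *)
Lemma norm_row_subr_dot_le P0 P1 v s : stochastic P0 -> stochastic P1 ->
  `|\sum_j (P1 s j - P0 s j) * v j| <= normm (P1 - P0) * sp v / 2.
Proof.
move=> [_ h0] [_ h1].
set M := \big[Num.max/v ord0]_j v j; set m := \big[Num.min/v ord0]_j v j.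
have vM j : v j <= M by apply: le_bigmax.
have vm j : m <= v j by apply: bigmin_le.
pose mid := (M + m) / 2.
have -> : \sum_j (P1 s j - P0 s j) * v j = \sum_j (P1 s j - P0 s j) * (v j - mid).
  under [RHS]eq_bigr do rewrite mulrBr.
  by rewrite sumrB -mulr_suml sumrB h1 h0 subrr mul0r subr0.
apply: le_trans (ler_norm_sum _ _ _) _.
apply: le_trans (_ : \sum_j `|(P1 - P0) s j| * (sp v / 2) <= _).
  apply: ler_sum => j _; rewrite normrM !mxE; apply: ler_wpM2l => //.
  rewrite /sp -/M -/m ler_norml; have := vM j; have := vm j; rewrite /mid.
  by move=> h2 h3; apply/andP; split; lra.
rewrite -mulr_suml -mulrA ler_wpM2r ?divr_ge0 ?sp_ge0 //.
exact: le_bigmax.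
Qed.

End SpanAndNorms.

Lemma sp_subr_cst (R : realType) n (v : 'I_n.+1 -> R) c : sp (fun i => v i - c) <= sp v.
Proof. by apply: sp_le => i j; have := sub_le_sp v i j; lra. Qed.

Lemma sp_bias_le (R : realType) n (P : 'M[R]_n.+1) r :
  stochastic P -> unichain P -> sp (bias P r) <= sp r * diam P.
Proof.
move=> sP uni; apply: sp_le => i j; rewrite /sp.
by apply: bias_sub_le => // k; [exact: bigmin_le | exact: le_bigmax].
Qed.

Section ExtremePolicies.
Variables (R : realType) (n : nat).
Notation S := 'I_n.+1.
Notation vec := (S -> R).
Notation mx := 'M[R]_n.+1.
Variables (P0 P1 : mx) (r0 r1 : vec).
Hypotheses (sP0 : stochastic P0) (sP1 : stochastic P1).

Lemma pol_mx_setT : pol_mx P0 P1 [set: S] = P1.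
Proof. by apply/matrixP => i j; rewrite mxE inE. Qed.

Lemma pol_mx_set0 : pol_mx P0 P1 set0 = P0.
Proof. by apply/matrixP => i j; rewrite mxE inE. Qed.

Lemma act_adv_subr_le (lam : R) pi s :
  `|act_adv P0 P1 r0 r1 lam pi s - (r1 s - lam - r0 s)| <=
    normm (P1 - P0) * sp (pbias P0 P1 r0 r1 lam pi) / 2.
Proof. by rewrite /act_adv addrAC subrr add0r; apply: norm_row_subr_dot_le. Qed.

Lemma sp_pbias_setT (lam : R) : unichain (pol_mx P0 P1 [set: S]) ->
  sp (pbias P0 P1 r0 r1 lam [set: S]) <= sp r1 * diam P1.
Proof.
rewrite pol_mx_setT => uni.
have -> : pbias P0 P1 r0 r1 lam [set: S] = bias P1 (fun i => r1 i - lam).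
  by rewrite /pbias pol_mx_setT; congr bias; apply: funext => i; rewrite /pol_rew inE.
apply: le_trans (sp_bias_le _ sP1 uni) _.
by rewrite ler_wpM2r ?diam_ge0 ?sp_subr_cst.
Qed.

Lemma sp_pbias_set0 (lam : R) : unichain (pol_mx P0 P1 set0) ->
  sp (pbias P0 P1 r0 r1 lam set0) <= sp r0 * diam P0.
Proof.
rewrite pol_mx_set0 => uni.
have -> : pbias P0 P1 r0 r1 lam set0 = bias P0 r0.
  by rewrite /pbias pol_mx_set0; congr bias; apply: funext => i; rewrite /pol_rew inE.
exact: sp_bias_le.
Qed.

Let deviation_le (b : vec) D : sp b <= D ->
  normm (P1 - P0) * sp b / 2 <= D * normm (P1 - P0) / 2.
Proof.
move=> bD; rewrite ler_pM2r ?invr_gt0 ?ltr0n // [X in _ <= X]mulrC.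
by rewrite ler_wpM2l ?normm_ge0.
Qed.

Lemma act_adv_setT_gt0 (lam : R) s : unichain (pol_mx P0 P1 [set: S]) ->
  lam < - normv (fun i => r1 i - r0 i) - sp r1 * diam P1 * normm (P1 - P0) / 2 ->
  0 < act_adv P0 P1 r0 r1 lam [set: S] s.
Proof.
move=> uni; have := act_adv_subr_le lam [set: S] s.
have := deviation_le (sp_pbias_setT lam uni).
have := normv_ge (fun i => r1 i - r0 i) s.
by rewrite !ler_norml => /andP [? _] ? /andP [? _]; lra.
Qed.

Lemma act_adv_set0_lt0 (lam : R) s : unichain (pol_mx P0 P1 set0) ->
  normv (fun i => r1 i - r0 i) + sp r0 * diam P0 * normm (P1 - P0) / 2 < lam ->
  act_adv P0 P1 r0 r1 lam set0 s < 0.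
Proof.
move=> uni; have := act_adv_subr_le lam set0 s.
have := deviation_le (sp_pbias_set0 lam uni).
have := normv_ge (fun i => r1 i - r0 i) s.
by rewrite !ler_norml => /andP [_ ?] ? /andP [_ ?]; lra.
Qed.

Lemma whittle_index_ge s (lam_s L : R) : whittle_index P0 P1 r0 r1 s lam_s ->
  (forall lam, lam < L -> exists2 pi, bias_optimal P0 P1 r0 r1 lam pi &
     0 < act_adv P0 P1 r0 r1 lam pi s) -> L <= lam_s.
Proof.
move=> [_ adv_lt0] hL; rewrite leNgt; apply/negP => ltL.
pose lam := (lam_s + L) / 2.
have [lam_s_lt lt_L] : lam_s < lam /\ lam < L by rewrite /lam; split; lra.
have [pi bo adv_gt0] := hL lam lt_L.
by have := adv_lt0 lam lam_s_lt pi bo; rewrite ltNge ltW.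
Qed.

Lemma whittle_index_le s (lam_s U : R) : whittle_index P0 P1 r0 r1 s lam_s ->
  (forall lam, U < lam -> exists2 pi, bias_optimal P0 P1 r0 r1 lam pi &
     act_adv P0 P1 r0 r1 lam pi s < 0) -> lam_s <= U.
Proof.
move=> [adv_gt0 _] hU; rewrite leNgt; apply/negP => ltU.
pose lam := (lam_s + U) / 2.
have [lt_lam_s U_lt] : lam < lam_s /\ U < lam by rewrite /lam; split; lra.
have [pi bo adv_lt0] := hU lam U_lt.
by have := adv_gt0 lam lt_lam_s pi bo; rewrite ltNge ltW.
Qed.

End ExtremePolicies.

Theorem mainTheorem4 (R : realType) (n : nat) (P0 P1 : 'M[R]_n.+1)
    (r0 r1 : 'I_n.+1 -> R) :
  stochastic P0 -> stochastic P1 ->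
  unichain (pol_mx P0 P1 [set: 'I_n.+1]) ->
  unichain (pol_mx P0 P1 (set0 : {set 'I_n.+1})) ->
  indexable P0 P1 r0 r1 ->
  forall (s : 'I_n.+1) (lam_s : R), whittle_index P0 P1 r0 r1 s lam_s ->
    - normv (fun i => r1 i - r0 i) - sp r1 * diam P1 * normm (P1 - P0) / 2 <= lam_s
    /\ lam_s <= normv (fun i => r1 i - r0 i) + sp r0 * diam P0 * normm (P1 - P0) / 2.
Proof.
move=> sP0 sP1 uniT uni0 _ s lam_s ws; split.
- apply: (whittle_index_ge ws) => lam lamL; exists [set: 'I_n.+1];
    last exact: act_adv_setT_gt0.
  by apply: bias_optimal_of_act_adv => // s'; rewrite inE; exact: act_adv_setT_gt0.
- apply: (whittle_index_le ws) => lam lamU; exists set0;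
    last exact: act_adv_set0_lt0.
  by apply: bias_optimal_of_act_adv => // s'; rewrite inE; exact: act_adv_set0_lt0.
Qed.
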